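(* For linear codes $\mathcal{C}_1,\dots,\mathcal{C}_D\subseteq\mathbb{F}_q^n$ and the zero code $\mathbf{0}\subseteq\mathbb{F}_q^n$ we have $\rho(\mathbf{0},\mathcal{C}_1,\dots,\mathcal{C}_D)=\rho(\mathcal{C}_1,\dots,\mathcal{C}_D)$.
   Context: $\mathbb{F}_q$ is a finite field of characteristic 2. For a finite set $S$, $|v|$ is the Hamming weight of $v\in\mathbb{F}_q^S$ and $\|v\|=|v|/|S|$. For linear codes $\mathcal{A}_1,\dots,\mathcal{A}_E\subseteq\mathbb{F}_q^n$: $\mathcal{L}_i$ is the set of lines in $[n]^E$ parallel to the $i$-th axis; $\mathcal{A}^{(i)}=\{c\in\mathbb{F}_q^{[n]^E}:c|_\ell\in\mathcal{A}_i\ \forall\ell\in\mathcal{L}_i\}$; $\mathcal{A}_1\boxplus\cdots\boxplus\mathcal{A}_E=\sum_i\mathcal{A}^{(i)}$; $|x|_i$ is the number of $\ell\in\mathcal{L}_i$ with $x|_\ell\ne0$ and $\|x\|_i=|x|_i/n^{E-1}$. The collection is $\rho$-product-expanding if every $c\in\mathcal{A}_1\boxplus\cdots\boxplus\mathcal{A}_E$ can be written $c=\sum_ia_i$, $a_i\in\mathcal{A}^{(i)}$, with $\rho\sum_i\|a_i\|_i\le\|c\|$; $\rho(\mathcal{A}_1,\dots,\mathcal{A}_E)$ is the maximal such $\rho$. *)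

From HB Require Import structures.
From mathcomp Require Import all_boot all_order all_algebra all_field.
From mathcomp Require Import all_classical all_reals all_analysis.
Set Implicit Arguments. Unset Strict Implicit. Unset Printing Implicit Defensive.
Import Order.TTheory GRing.Theory Num.Theory.
Local Open Scope ring_scope.

Definition grid (n E : nat) := {ffun 'I_E -> 'I_n}.
Definition word (F : fieldType) (n E : nat) := {ffun grid n E -> F}.

Definition upd n E (y : grid n E) (i : 'I_E) (k : 'I_n) : grid n E :=
  [ffun j => if j == i then k else y j].

Definition restr (F : fieldType) n E (c : word F n E) (i : 'I_E) (y : grid n E)
  : 'rV[F]_n := \row_(k < n) c (upd y i k).

Definition lines n E (i : 'I_E) : {set {set grid n E}} :=
  [set [set z : grid n E | [forall j, (j != i) ==> (z j == y j)]] | y : grid n E].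

Definition line_wt (F : fieldType) n E (x : word F n E) (i : 'I_E) : nat :=
  #|[set l in @lines n E i | [exists z in l, x z != 0]]|.

Definition line_nwt (R : realType) (F : fieldType) n E (x : word F n E) (i : 'I_E) : R :=
  (line_wt x i)%:R / (n ^ (E.-1))%:R.

Definition nwt (R : realType) (F : fieldType) n E (x : word F n E) : R :=
  #|[set z | x z != 0]|%:R / #|{: grid n E}|%:R.

Definition in_Ai (F : fieldType) n E (A : 'I_E -> {vspace 'rV[F]_n}) (i : 'I_E)
  (c : word F n E) : Prop :=
  forall y : grid n E, restr c i y \in A i.

Definition in_boxsum (F : fieldType) n E (A : 'I_E -> {vspace 'rV[F]_n})
  (c : word F n E) : Prop :=
  exists a : 'I_E -> word F n E, (forall i, in_Ai A i (a i)) /\ c = \sum_i a i.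

Definition product_expanding (R : realType) (F : fieldType) n E
  (A : 'I_E -> {vspace 'rV[F]_n}) (r : R) : Prop :=
  forall c : word F n E, in_boxsum A c ->
    exists a : 'I_E -> word F n E,
      (forall i, in_Ai A i (a i)) /\ c = \sum_i a i /\
      r * \sum_i line_nwt R (a i) i <= nwt R c.

(* rho(A_1,...,A_E): the maximal such rho, taken as a supremum in the
   extended reals (it is +oo exactly when the product code is {0}). *)
Definition rho (R : realType) (F : fieldType) n E
  (A : 'I_E -> {vspace 'rV[F]_n}) : \bar R :=
  ereal_sup [set r%:E | r in [set r : R | product_expanding A r]].

Definition cons0 (F : fieldType) n D (C : 'I_D -> {vspace 'rV[F]_n})
  : 'I_D.+1 -> {vspace 'rV[F]_n} :=
  fun i => if unlift ord0 i is Some j then C j else 0%VS.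

(* Split [n]^(D+1) into the n slices {x0} x [n]^D.  Because the first code is
   zero, a word of 0 ⊞ C_1 ⊞ ... ⊞ C_D has no component along the first axis,
   so it is exactly a stack of n words of C_1 ⊞ ... ⊞ C_D, and both ||c|| and
   the line weights along the remaining axes are averages over the slices.
   Stacking optimal decompositions of the slices gives rho(C) <= rho(0, C).
   Conversely, placing a word c of C_1 ⊞ ... ⊞ C_D in one slice (zeros
   elsewhere) divides ||c|| by n, while restricting a decomposition of the
   padded word to that slice multiplies each line weight by at most n; hence
   rho(0, C) <= rho(C).  Nonpositive rho and the empty grid n = 0 are trivial. *)

From mathcomp Require Import all_boot all_order all_algebra all_field.
From mathcomp Require Import all_classical all_reals all_analysis.
From mathcomp Require Import ring.
Set Implicit Arguments. Unset Strict Implicit. Unset Printing Implicit Defensive.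
Import Order.TTheory GRing.Theory Num.Theory.
Local Open Scope ring_scope.

Section GridCons.
Variables n D : nat.
Implicit Types (y : grid n D).

Definition gcons (x0 : 'I_n) (y : grid n D) : grid n D.+1 :=
  [ffun i => if unlift ord0 i is Some j then y j else x0].

Definition gbehead (y : grid n D.+1) : grid n D := [ffun j => y (lift ord0 j)].

Lemma gcons_ord0 x0 y : gcons x0 y ord0 = x0.
Proof. by rewrite ffunE unlift_none. Qed.

Lemma gcons_lift x0 y j : gcons x0 y (lift ord0 j) = y j.
Proof. by rewrite ffunE liftK. Qed.

Lemma gbehead_cons x0 y : gbehead (gcons x0 y) = y.
Proof. by apply/ffunP => j; rewrite ffunE gcons_lift. Qed.

Lemma gcons_behead (y : grid n D.+1) : gcons (y ord0) (gbehead y) = y.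
Proof. by apply/ffunP => i; rewrite ffunE; case: unliftP => [j ->|->]; rewrite ?ffunE. Qed.

Lemma upd_gcons x0 y j k : upd (gcons x0 y) (lift ord0 j) k = gcons x0 (upd y j k).
Proof.
apply/ffunP => i; rewrite !ffunE; case: unliftP => [j' ->|->].
  by rewrite (inj_eq (@lift_inj _ ord0)) ffunE.
by rewrite (negbTE (neq_lift _ _)).
Qed.

Lemma card_set_gcons (P : pred (grid n D.+1)) :
  #|[set y | P y]| = (\sum_(x0 : 'I_n) #|[set y | P (gcons x0 y)]|)%N.
Proof.
rewrite -sum1_card (reindex (fun p : 'I_n * grid n D => gcons p.1 p.2)) /=; last first.
  exists (fun y : grid n D.+1 => (y ord0, gbehead y)) => [[x y]|y] _ /=.
    by rewrite gcons_ord0 gbehead_cons.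
  by rewrite gcons_behead.
rewrite (eq_bigl (fun p => predT p.1 && (fun x0 y => P (gcons x0 y)) p.1 p.2));
  last by move=> p; rewrite inE.
rewrite -(pair_big_dep predT (fun x0 y => P (gcons x0 y)) (fun _ _ => 1%N)).
by apply: eq_bigr => x0 _; rewrite -sum1_card; apply: eq_bigl => y; rewrite inE.
Qed.

End GridCons.

Section Lines.
Variables (F : fieldType) (n E : nat).
Implicit Types (x : word F n E) (y z : grid n E) (i : 'I_E).

Lemma upd_at y i k : upd y i k i = k.
Proof. by rewrite ffunE eqxx. Qed.

Lemma upd_id y i : upd y i (y i) = y.
Proof. by apply/ffunP => j; rewrite ffunE; case: eqP => // ->. Qed.

Lemma upd_upd y i k k' : upd (upd y i k) i k' = upd y i k'.
Proof. by apply/ffunP => j; rewrite !ffunE; case: eqP. Qed.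

Definition line_through i y : {set grid n E} :=
  [set z : grid n E | [forall j, (j != i) ==> (z j == y j)]].

Lemma linesE i : @lines n E i = [set line_through i y | y : grid n E].
Proof. by []. Qed.

Lemma line_through_upd i y k : line_through i (upd y i k) = line_through i y.
Proof. by apply/setP => z; rewrite !inE; apply/eq_forallb => j; rewrite ffunE; case: eqP. Qed.

Lemma upd_in_line_through i y k : upd y i k \in line_through i y.
Proof. by rewrite inE; apply/forallP => j; apply/implyP => ji; rewrite ffunE (negbTE ji). Qed.

Lemma line_throughP i y z : z \in line_through i y -> z = upd y i (z i).
Proof.
rewrite inE => /forallP zy; apply/ffunP => j; rewrite ffunE.
by case: eqP => [->|/eqP ji] //; apply/eqP; rewrite -(implyTb (z j == _)) -ji zy.
Qed.

End Lines.

Lemma line_wt_grid0 (F : fieldType) E (x : word F 0 E) i : line_wt x i = 0%N.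
Proof.
apply/eqP; rewrite cards_eq0; apply/eqP/setP => l; rewrite !inE.
by apply/negbTE/negP => /andP [/imsetP [y _ _] _]; case: (y i).
Qed.

Lemma line_wtE (F : fieldType) N E (x : word F N.+1 E) i :
  line_wt x i = #|[set y : grid N.+1 E | (y i == ord0) && [exists k, x (upd y i k) != 0]]|.
Proof.
rewrite /line_wt; set B := [set y : grid N.+1 E | _].
suff -> : [set l in @lines N.+1 E i | [exists z in l, x z != 0]] = line_through i @: B.
  rewrite card_in_imset // => y1 y2; rewrite !inE => /andP [/eqP y1i _] /andP [/eqP y2i _] e.
  have /line_throughP -> : y1 \in line_through i y2 by rewrite -e -{1}(upd_id y1 i) upd_in_line_through.
  by rewrite y1i -y2i upd_id.
apply/setP => l; rewrite !inE linesE; apply/andP/imsetP.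
- case=> /imsetP [y _ ->] /existsP [z /andP [zl xz]].
  exists (upd y i ord0); last by rewrite line_through_upd.
  rewrite inE upd_at eqxx; apply/existsP; exists (z i).
  by rewrite upd_upd -(line_throughP zl).
- case=> y; rewrite inE => /andP [_ /existsP [k xk]] ->; split; first exact: imset_f.
  by apply/existsP; exists (upd y i k); rewrite xk upd_in_line_through.
Qed.

Section Slices.
Variables (F : fieldType) (n D : nat).
Implicit Types (w : word F n D.+1) (f : 'I_n -> word F n D).

Definition slice (x0 : 'I_n) w : word F n D := [ffun y => w (gcons x0 y)].

Definition stack f : word F n D.+1 := [ffun z : grid n D.+1 => f (z ord0) (gbehead z)].

Lemma slice_stack f x0 : slice x0 (stack f) = f x0.
Proof. by apply/ffunP => y; rewrite !ffunE unlift_none gbehead_cons. Qed.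

Lemma stack_slice w : stack (slice^~ w) = w.
Proof. by apply/ffunP => z; rewrite !ffunE gcons_behead. Qed.

Lemma slice_sum x0 I (r : seq I) (P : pred I) (G : I -> word F n D.+1) :
  slice x0 (\sum_(i <- r | P i) G i) = \sum_(i <- r | P i) slice x0 (G i).
Proof. by apply/ffunP => y; rewrite ffunE !sum_ffunE; apply: eq_bigr => i _; rewrite ffunE. Qed.

Lemma slice0 x0 : slice x0 0 = 0.
Proof. by apply/ffunP => y; rewrite !ffunE. Qed.

Lemma stack_sum I (r : seq I) (P : pred I) (G : I -> 'I_n -> word F n D) :
  stack (fun x0 => \sum_(i <- r | P i) G i x0) = \sum_(i <- r | P i) stack (G i).
Proof. by apply/ffunP => z; rewrite ffunE !sum_ffunE; apply: eq_bigr => i _; rewrite ffunE. Qed.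

Lemma restr_slice w j x0 y :
  restr w (lift ord0 j) (gcons x0 y) = restr (slice x0 w) j y.
Proof. by apply/rowP => k; rewrite !mxE upd_gcons ffunE. Qed.

Variable C : 'I_D -> {vspace 'rV[F]_n}.

Lemma cons0_ord0 : cons0 C ord0 = 0%VS.
Proof. by rewrite /cons0 unlift_none. Qed.

Lemma cons0_lift j : cons0 C (lift ord0 j) = C j.
Proof. by rewrite /cons0 liftK. Qed.

Lemma in_Ai_cons0_ord0 w : in_Ai (cons0 C) ord0 w -> w = 0.
Proof.
move=> w0; apply/ffunP => z; rewrite ffunE.
have := w0 z; rewrite cons0_ord0 memv0 => /eqP/rowP/(_ (z ord0)).
by rewrite !mxE upd_id.
Qed.

Lemma in_Ai_cons0_lift w j :
  in_Ai (cons0 C) (lift ord0 j) w <-> forall x0, in_Ai C j (slice x0 w).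
Proof.
split=> [wj x0 y | wj z]; first by rewrite -restr_slice -cons0_lift; apply: wj.
by rewrite cons0_lift -(gcons_behead z) restr_slice; apply: wj.
Qed.

End Slices.

Lemma in_Ai0 (F : fieldType) n E (A : 'I_E -> {vspace 'rV[F]_n}) i : in_Ai A i 0.
Proof.
move=> y; suff -> : restr (0 : word F n E) i y = 0 by exact: mem0v.
by apply/rowP => k; rewrite !mxE ffunE.
Qed.

Lemma card_grid n E : #|{: grid n E}| = (n ^ E)%N.
Proof. by rewrite card_ffun !card_ord. Qed.

Section Weights.
Variables (R : realType) (F : fieldType).

Section Basic.
Variables n E : nat.

Lemma line_nwt_ge0 (x : word F n E) i : 0 <= line_nwt R x i.
Proof. by rewrite divr_ge0 ?ler0n. Qed.

Lemma nwt_ge0 (x : word F n E) : 0 <= nwt R x.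
Proof. by rewrite divr_ge0 ?ler0n. Qed.

Lemma line_nwt0 i : line_nwt R (0 : word F n E) i = 0.
Proof.
rewrite /line_nwt /line_wt (_ : [set _ in _ | _] = finset.set0) ?cards0 ?mul0r //.
apply/setP => l; rewrite !inE; apply/negbTE/nandP; right.
by apply/existsPn => z; rewrite ffunE eqxx andbF.
Qed.

Lemma nwt0 : nwt R (0 : word F n E) = 0.
Proof.
rewrite /nwt (_ : [set _ | _] = finset.set0) ?cards0 ?mul0r //.
by apply/setP => z; rewrite !inE ffunE eqxx.
Qed.

End Basic.

Variables N D : nat.
Implicit Types w : word F N.+1 D.+1.

Lemma line_wt_lift w j :
  line_wt w (lift ord0 j) = (\sum_x0 line_wt (slice x0 w) j)%N.
Proof.
rewrite line_wtE card_set_gcons; apply: eq_bigr => x0 _; rewrite line_wtE.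
apply: eq_card => y; rewrite !inE gcons_lift; congr (_ && _).
by apply: eq_existsb => k; rewrite upd_gcons ffunE.
Qed.

Lemma line_nwt_lift w j :
  line_nwt R w (lift ord0 j) * N.+1%:R = \sum_x0 line_nwt R (slice x0 w) j.
Proof.
have D_gt0 : (0 < D)%N by case: j => k; apply: leq_ltn_trans.
rewrite /line_nwt -mulr_suml line_wt_lift natr_sum /=.
have -> : (N.+1 ^ D = N.+1 * N.+1 ^ D.-1)%N by rewrite -expnS prednK.
rewrite natrM.
have N_neq0 : (N.+1%:R : R) != 0 by rewrite pnatr_eq0.
have ND_neq0 : ((N.+1 ^ D.-1)%:R : R) != 0 by rewrite pnatr_eq0 expn_eq0.
by field; rewrite ND_neq0 nat1r N_neq0.
Qed.

Lemma nwt_slice w : nwt R w * N.+1%:R = \sum_x0 nwt R (slice x0 w).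
Proof.
rewrite /nwt -mulr_suml card_set_gcons natr_sum !card_grid expnS natrM.
rewrite (eq_bigr (fun x0 => #|[set y | slice x0 w y != 0]|%:R)); last first.
  by move=> x0 _; congr _%:R; apply: eq_card => y; rewrite !inE ffunE.
have N_neq0 : (N.+1%:R : R) != 0 by rewrite pnatr_eq0.
have ND_neq0 : ((N.+1 ^ D)%:R : R) != 0 by rewrite pnatr_eq0 expn_eq0.
by field; rewrite ND_neq0 nat1r N_neq0.
Qed.

Lemma line_nwt_slice_le w j x0 :
  line_nwt R (slice x0 w) j <= line_nwt R w (lift ord0 j) * N.+1%:R.
Proof.
rewrite line_nwt_lift (bigD1 x0) //= lerDl.
by apply: sumr_ge0 => x1 _; apply: line_nwt_ge0.
Qed.

End Weights.

Section Cons0.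
Variables (R : realType) (F : fieldType) (N D : nat).
Variable C : 'I_D -> {vspace 'rV[F]_N.+1}.
Implicit Types (c : word F N.+1 D) (b : 'I_N.+1 -> 'I_D -> word F N.+1 D).

Definition stack_decomp b : 'I_D.+1 -> word F N.+1 D.+1 :=
  fun i => if unlift ord0 i is Some j then stack (fun x0 => b x0 j) else 0.

Lemma in_Ai_stack_decomp b :
  (forall x0 j, in_Ai C j (b x0 j)) -> forall i, in_Ai (cons0 C) i (stack_decomp b i).
Proof.
move=> bA i; rewrite /stack_decomp; case: unliftP => [j ->|_]; last exact: in_Ai0.
by apply/in_Ai_cons0_lift => x0; rewrite slice_stack.
Qed.

Lemma sum_stack_decomp b :
  \sum_i stack_decomp b i = stack (fun x0 => \sum_j b x0 j).
Proof.
rewrite big_ord_recl /stack_decomp unlift_none add0r stack_sum.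
by apply: eq_bigr => j _; rewrite liftK.
Qed.

Lemma sum_line_nwt_stack_decomp b :
  (\sum_i line_nwt R (stack_decomp b i) i) * N.+1%:R =
  \sum_x0 \sum_j line_nwt R (b x0 j) j.
Proof.
rewrite big_ord_recl /stack_decomp unlift_none line_nwt0 add0r mulr_suml exchange_big.
apply: eq_bigr => j _; rewrite liftK line_nwt_lift.
by apply: eq_bigr => x0 _; rewrite slice_stack.
Qed.

Lemma in_boxsum_cons0 (w : word F N.+1 D.+1) :
  in_boxsum (cons0 C) w <-> forall x0, in_boxsum C (slice x0 w).
Proof.
split=> [[a [aA ->]] x0 | wB].
  exists (fun j => slice x0 (a (lift ord0 j))); split.
    by move=> j; apply: (proj1 (in_Ai_cons0_lift _ _ _) (aA (lift ord0 j))).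
  by rewrite slice_sum big_ord_recl (in_Ai_cons0_ord0 (aA ord0)) slice0 add0r.
have [b bP] := boolp.choice wB.
exists (stack_decomp b); split; first by apply: in_Ai_stack_decomp => x0; case: (bP x0).
rewrite sum_stack_decomp -{1}(stack_slice w); congr stack.
by apply: boolp.funext => x0; case: (bP x0).
Qed.

Definition pad c : word F N.+1 D.+1 := stack (fun x0 => if x0 == ord0 then c else 0).

Lemma slice_pad c : slice ord0 (pad c) = c.
Proof. by rewrite slice_stack eqxx. Qed.

Lemma in_boxsum_pad c : in_boxsum C c -> in_boxsum (cons0 C) (pad c).
Proof.
move=> cB; apply/in_boxsum_cons0 => x0; rewrite slice_stack.
case: eqP => _ //; exists (fun=> 0); split; first by move=> j; apply: in_Ai0.
by rewrite big1.
Qed.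

Lemma nwt_pad c : nwt R (pad c) * N.+1%:R = nwt R c.
Proof.
rewrite nwt_slice (bigD1 ord0) //= slice_pad big1 ?addr0 // => x0 /negbTE x0_neq0.
by rewrite slice_stack x0_neq0 nwt0.
Qed.

Lemma product_expanding_to_cons0 (r : R) :
  product_expanding C r -> product_expanding (cons0 C) r.
Proof.
move=> CE w /in_boxsum_cons0 wB.
have [b bP] := boolp.choice (fun x0 => CE _ (wB x0)).
exists (stack_decomp b); split; first by apply: in_Ai_stack_decomp => x0; case: (bP x0).
split.
  rewrite sum_stack_decomp -{1}(stack_slice w); congr stack.
  by apply: boolp.funext => x0; case: (bP x0) => _ [].
rewrite -(ler_pM2r (ltr0Sn R N)) -mulrA sum_line_nwt_stack_decomp nwt_slice mulr_sumr.
by apply: ler_sum => x0 _; case: (bP x0) => _ [].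
Qed.

Lemma product_expanding_from_cons0 (r : R) : 0 < r ->
  product_expanding (cons0 C) r -> product_expanding C r.
Proof.
move=> r_gt0 CE c /in_boxsum_pad /CE [e [eA [ce er]]].
have e0 := in_Ai_cons0_ord0 (eA ord0).
exists (fun j => slice ord0 (e (lift ord0 j))); split.
  by move=> j; apply: (proj1 (in_Ai_cons0_lift _ _ _) (eA (lift ord0 j))).
split; first by rewrite -[c]slice_pad ce slice_sum big_ord_recl e0 slice0 add0r.
have N_gt0 := ltr0Sn R N.
rewrite -nwt_pad; apply: le_trans (ler_wpM2r (ltW N_gt0) er).
rewrite -mulrA; apply: ler_wpM2l; first exact: ltW.
rewrite big_ord_recl e0 line_nwt0 add0r mulr_suml.
by apply: ler_sum => j _; apply: line_nwt_slice_le.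
Qed.

End Cons0.

Lemma product_expanding_le0 (R : realType) (F : fieldType) n E
  (A : 'I_E -> {vspace 'rV[F]_n}) (r : R) : r <= 0 -> product_expanding A r.
Proof.
move=> r_le0 c [a [aA ca]]; exists a; split=> //; split=> //.
apply: le_trans (nwt_ge0 R c); apply: mulr_le0_ge0 => //.
by apply: sumr_ge0 => i _; apply: line_nwt_ge0.
Qed.

Lemma product_expanding_grid0 (R : realType) (F : fieldType) E
  (A : 'I_E -> {vspace 'rV[F]_0}) (r : R) : product_expanding A r.
Proof.
move=> c [a [aA ca]]; exists a; split=> //; split=> //.
by rewrite big1 ?mulr0 ?nwt_ge0 // => i _; rewrite /line_nwt line_wt_grid0 mul0r.
Qed.

Lemma product_expanding_cons0 (R : realType) (F : fieldType) n D
  (C : 'I_D -> {vspace 'rV[F]_n}) (r : R) :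
  product_expanding (cons0 C) r <-> product_expanding C r.
Proof.
case: n C => [|N] C; first by split=> _; apply: product_expanding_grid0.
split; last exact: product_expanding_to_cons0.
case: (lerP r 0) => [/product_expanding_le0 // | r_gt0].
exact: product_expanding_from_cons0.
Qed.

Theorem lemma3 (R : realType) (F : finFieldType) (HF : (2%N \in [pchar F])%R)
  (n D : nat) (C : 'I_D -> {vspace 'rV[F]_n}) :
  rho R (cons0 C) = rho R C.
Proof.
rewrite /rho; congr (ereal_sup [set _%:E | _ in _]).
by apply/boolp.funext => r; apply/boolp.propext; apply: product_expanding_cons0.
Qed.
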